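(* Let $G$ be a finite group acting linearly on a finite-dimensional complex vector space $V$, and fix a norm on $V$. Let $I\subseteq\mathbb{R}$ be an interval and $c:I\to V/\!\!/G=\sigma(V)\subseteq\mathbb{C}^n$ continuous. If $c$ admits a Lipschitz lift $\tilde c:I\to V$ (i.e. $\sigma\circ\tilde c=c$), then every continuous lift $\bar c:I\to V$ of $c$ is Lipschitz.
   Context: $\sigma=(\sigma_1,\dots,\sigma_n)$ where $\sigma_1,\dots,\sigma_n$ are homogeneous generators of the algebra $\mathbb{C}[V]^G$ of $G$-invariant polynomials; $V/\!\!/G$ is identified with $\sigma(V)\subseteq\mathbb{C}^n$. A lift of $c$ is a curve $\bar c$ in $V$ with $\sigma\circ\bar c=c$. *)

From Stdlib Require Import Reals List.
Set Implicit Arguments.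
Open Scope R_scope.

Definition Cx : Type := (R * R)%type.
Definition Cadd (z w : Cx) : Cx := (fst z + fst w, snd z + snd w).
Definition Cmul (z w : Cx) : Cx :=
  (fst z * fst w - snd z * snd w, fst z * snd w + snd z * fst w).
Definition Copp (z : Cx) : Cx := (- fst z, - snd z).
Definition Cmod (z : Cx) : R := sqrt (fst z ^ 2 + snd z ^ 2).
Fixpoint Cpow (z : Cx) (k : nat) : Cx :=
  match k with O => (1, 0) | S k' => Cmul z (Cpow z k') end.

Definition Fin (n : nat) : Type := { i : nat | (i < n)%nat }.
Definition Vec (n : nat) : Type := Fin n -> Cx.
Definition vzero (n : nat) : Vec n := fun _ => (0, 0).
Definition vadd n (v w : Vec n) : Vec n := fun i => Cadd (v i) (w i).
Definition vscal n (a : Cx) (v : Vec n) : Vec n := fun i => Cmul a (v i).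
Definition vsub n (v w : Vec n) : Vec n := fun i => Cadd (v i) (Copp (w i)).

Definition is_norm d (N : Vec d -> R) : Prop :=
  (forall v w, N (vadd v w) <= N v + N w) /\
  (forall a v, N (vscal a v) = Cmod a * N v) /\
  (forall v, N v = 0 -> v = @vzero d).

Definition is_group (G : Type) (mul : G -> G -> G) (e : G) (inv : G -> G) : Prop :=
  (forall x y z, mul x (mul y z) = mul (mul x y) z) /\
  (forall x, mul e x = x) /\ (forall x, mul x e = x) /\
  (forall x, mul (inv x) x = e) /\ (forall x, mul x (inv x) = e).

Definition is_finite (G : Type) : Prop := exists l : list G, forall g, In g l.

Definition linear_action (G : Type) (mul : G -> G -> G) (e : G) d
  (act : G -> Vec d -> Vec d) : Prop :=
  (forall v, act e v = v) /\
  (forall g h v, act (mul g h) v = act g (act h v)) /\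
  (forall g v w, act g (vadd v w) = vadd (act g v) (act g w)) /\
  (forall g a v, act g (vscal a v) = vscal a (act g v)).

Inductive Poly (d : nat) : Type :=
| PVar : Fin d -> Poly d
| PConst : Cx -> Poly d
| PAdd : Poly d -> Poly d -> Poly d
| PMul : Poly d -> Poly d -> Poly d.
Arguments PVar {d} _.
Arguments PConst {d} _.
Arguments PAdd {d} _ _.
Arguments PMul {d} _ _.

Fixpoint peval d (p : Poly d) (v : Vec d) : Cx :=
  match p with
  | PVar i => v i
  | PConst a => a
  | PAdd p q => Cadd (peval p v) (peval q v)
  | PMul p q => Cmul (peval p v) (peval q v)
  end.

Definition invariant (G : Type) d (act : G -> Vec d -> Vec d) (p : Poly d) : Prop :=
  forall g v, peval p (act g v) = peval p v.

Definition homogeneous d (p : Poly d) : Prop :=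
  exists k : nat, forall a v, peval p (vscal a v) = Cmul (Cpow a k) (peval p v).

Definition invariant_generators (G : Type) d n (act : G -> Vec d -> Vec d)
  (sgm : Fin n -> Poly d) : Prop :=
  (forall j, invariant act (sgm j) /\ homogeneous (sgm j)) /\
  (forall f : Poly d, invariant act f ->
     exists Q : Poly n, forall v, peval f v = peval Q (fun j => peval (sgm j) v)).

Definition sigma_map d n (sgm : Fin n -> Poly d) (v : Vec d) : Vec n :=
  fun j => peval (sgm j) v.

Definition is_interval (I : R -> Prop) : Prop :=
  forall a b x, I a -> I b -> a <= x <= b -> I x.

Definition continuous_on_norm d (N : Vec d -> R) (I : R -> Prop) (f : R -> Vec d) : Prop :=
  forall t, I t -> forall eps, 0 < eps -> exists delta, 0 < delta /\
    forall s, I s -> Rabs (s - t) < delta -> N (vsub (f s) (f t)) < eps.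

Definition continuous_on_coord n (I : R -> Prop) (f : R -> Vec n) : Prop :=
  forall j t, I t -> forall eps, 0 < eps -> exists delta, 0 < delta /\
    forall s, I s -> Rabs (s - t) < delta -> Cmod (Cadd (f s j) (Copp (f t j))) < eps.

Definition lipschitz_on d (N : Vec d -> R) (I : R -> Prop) (f : R -> Vec d) : Prop :=
  exists L : R, forall s t, I s -> I t -> N (vsub (f s) (f t)) <= L * Rabs (s - t).

Definition is_lift d n (sgm : Fin n -> Poly d) (I : R -> Prop) (c : R -> Vec n)
  (f : R -> Vec d) : Prop :=
  forall t, I t -> sigma_map sgm (f t) = c t.

From Stdlib Require Import Reals Lra Lia Psatz Arith List Permutation FinFun Classical ClassicalEpsilon FunctionalExtensionality.
Open Scope R_scope.
Set Implicit Arguments.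

(* Since the invariants separate orbits, cb r = g_r (ct r) for some
   g_r in G.  Near a point r0, write cb r0 = h (ct r0).  Distinct points of the
   orbit G (ct r0) are at least some rho > 0 apart, so by continuity of cb and
   of ct, g_r (ct r0) = h (ct r0) for r close to r0; then
   cb r - cb r0 = g_r (ct r - ct r0), of norm <= C K |r - r0|, where C bounds
   all the linear maps g and K is a Lipschitz constant of ct.  A real-induction
   argument turns this uniform local estimate into a global one. *)

Ltac cx_ring := unfold Cadd, Cmul, Copp; apply injective_projections; simpl; ring.

Lemma vext d (u v : Vec d) : (forall i, u i = v i) -> u = v.
Proof. intro H; apply functional_extensionality; exact H. Qed.

Lemma fin_eq d (i j : Fin d) : proj1_sig i = proj1_sig j -> i = j.
Proof. destruct i as [i hi], j as [j hj]; simpl; intros ->; f_equal; apply le_unique. Qed.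

Lemma Cmod_nonneg z : 0 <= Cmod z.
Proof. apply sqrt_pos. Qed.

Lemma Cmod_0 : Cmod (0,0) = 0.
Proof. unfold Cmod; cbn [fst snd]; replace (0^2+0^2) with 0 by ring; apply sqrt_0. Qed.

Lemma Cmod_m1 : Cmod (-1,0) = 1.
Proof. unfold Cmod; cbn [fst snd]; replace ((-1)^2+0^2) with 1 by ring; apply sqrt_1. Qed.

Lemma Cmod_le_abs z : Cmod z <= Rabs (fst z) + Rabs (snd z).
Proof.
  destruct z as [x y]; unfold Cmod; simpl.
  rewrite <- (sqrt_Rsqr (Rabs x + Rabs y)) by (pose proof (Rabs_pos x); pose proof (Rabs_pos y); lra).
  apply sqrt_le_1_alt; unfold Rsqr.
  pose proof (Rabs_pos x); pose proof (Rabs_pos y).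
  pose proof (Rsqr_abs x); pose proof (Rsqr_abs y); unfold Rsqr in *; nra.
Qed.

Lemma fst_le_Cmod z : Rabs (fst z) <= Cmod z.
Proof.
  destruct z as [x y]; unfold Cmod; simpl.
  rewrite <- sqrt_Rsqr_abs; apply sqrt_le_1_alt; unfold Rsqr; nra.
Qed.

Lemma snd_le_Cmod z : Rabs (snd z) <= Cmod z.
Proof.
  destruct z as [x y]; unfold Cmod; simpl.
  rewrite <- sqrt_Rsqr_abs; apply sqrt_le_1_alt; unfold Rsqr; nra.
Qed.

Lemma Cadd_Copp_eq0 z w : Cadd z (Copp w) = (0,0) -> z = w.
Proof.
  destruct z as [a b], w as [a' b']; unfold Cadd, Copp; simpl.
  intro E; injection E; intros; f_equal; lra.
Qed.

Definition Cinv (z : Cx) : Cx :=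
  (fst z / (fst z ^ 2 + snd z ^ 2), - snd z / (fst z ^ 2 + snd z ^ 2)).

Lemma Cmul_inv_r z : z <> (0,0) -> Cmul z (Cinv z) = (1,0).
Proof.
  destruct z as [x y]; intro H.
  assert (Hxy : x ^ 2 + y ^ 2 <> 0) by (intro E; apply H; f_equal; nra).
  unfold Cmul, Cinv; cbn [fst snd]; f_equal; field; exact Hxy.
Qed.

Lemma Cmul_inv_cancel z w : z <> (0,0) -> Cmul z (Cmul (Cinv z) w) = w.
Proof.
  intro H; transitivity (Cmul (Cmul z (Cinv z)) w); [cx_ring|].
  rewrite (Cmul_inv_r H); cx_ring.
Qed.

Section NormFacts.
Variables (d : nat) (N : Vec d -> R).
Hypothesis HN : is_norm N.

Lemma N_tri (v w : Vec d) : N (vadd v w) <= N v + N w.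
Proof. destruct HN as [H _]; apply H. Qed.

Lemma N_scal a (v : Vec d) : N (vscal a v) = Cmod a * N v.
Proof. destruct HN as [_ [H _]]; apply H. Qed.

Lemma N_def (v : Vec d) : N v = 0 -> v = @vzero d.
Proof. destruct HN as [_ [_ H]]; apply H. Qed.

Lemma vzero_scal : @vzero d = vscal (0,0) (@vzero d).
Proof. apply vext; intro i; unfold vscal, vzero; cx_ring. Qed.

Lemma N_zero : N (@vzero d) = 0.
Proof. rewrite vzero_scal, N_scal, Cmod_0; ring. Qed.

Lemma vsub_eq (v w : Vec d) : vsub v w = vadd v (vscal (-1,0) w).
Proof. apply vext; intro i; unfold vsub, vadd, vscal; cx_ring. Qed.

Lemma N_nonneg (v : Vec d) : 0 <= N v.
Proof.
  pose proof (N_tri v (vscal (-1,0) v)) as T.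
  rewrite <- vsub_eq, N_scal, Cmod_m1 in T.
  replace (vsub v v) with (@vzero d) in T by (apply vext; intro i; unfold vsub, vzero; cx_ring).
  rewrite N_zero in T; lra.
Qed.

Lemma N_sub_le (v w : Vec d) : N (vsub v w) <= N v + N w.
Proof. rewrite vsub_eq; eapply Rle_trans; [apply N_tri|]; rewrite N_scal, Cmod_m1; lra. Qed.

Lemma N_sub_sym (v w : Vec d) : N (vsub v w) = N (vsub w v).
Proof.
  replace (vsub v w) with (vscal (-1,0) (vsub w v))
    by (apply vext; intro i; unfold vsub, vscal; cx_ring).
  rewrite N_scal, Cmod_m1; ring.
Qed.

Lemma N_sub_tri (u v w : Vec d) : N (vsub u w) <= N (vsub u v) + N (vsub v w).
Proof.
  replace (vsub u w) with (vadd (vsub u v) (vsub v w))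
    by (apply vext; intro i; unfold vsub, vadd; cx_ring).
  apply N_tri.
Qed.

Lemma N_sub_self (v : Vec d) : N (vsub v v) = 0.
Proof.
  replace (vsub v v) with (@vzero d) by (apply vext; intro i; unfold vsub, vzero; cx_ring).
  apply N_zero.
Qed.

Lemma N_sub_pos (v w : Vec d) : v <> w -> 0 < N (vsub v w).
Proof.
  intro Hne; destruct (N_nonneg (vsub v w)) as [|E]; auto.
  exfalso; apply Hne, vext; intro i.
  apply Cadd_Copp_eq0, (f_equal (fun u => u i) (N_def (eq_sym E))).
Qed.
End NormFacts.

Definition coord d (w : Vec d) (k : nat) : Cx :=
  match lt_dec k d with left h => w (exist _ k h) | right _ => (0,0) end.

Definition ebas d (k : nat) : Vec d :=
  fun i => if Nat.eqb (proj1_sig i) k then (1,0) else (0,0).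

Definition trunc d (w : Vec d) (k : nat) : Vec d :=
  fun i => if Nat.ltb (proj1_sig i) k then w i else (0,0).

Lemma coord_fin d (w : Vec d) (i : Fin d) : coord w (proj1_sig i) = w i.
Proof.
  unfold coord; destruct (lt_dec (proj1_sig i) d) as [h|h].
  - f_equal; apply fin_eq; reflexivity.
  - destruct i; simpl in h; lia.
Qed.

Lemma trunc_0 d (w : Vec d) : trunc w 0 = @vzero d.
Proof. reflexivity. Qed.

Lemma trunc_full d (w : Vec d) : trunc w d = w.
Proof.
  apply vext; intros [i hi]; unfold trunc; simpl.
  replace (Nat.ltb i d) with true; [reflexivity|symmetry; apply Nat.ltb_lt; exact hi].
Qed.

Lemma trunc_S d (w : Vec d) k :
  trunc w (S k) = vadd (trunc w k) (vscal (coord w k) (@ebas d k)).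
Proof.
  apply vext; intro i; unfold trunc, vadd, vscal, ebas.
  destruct (Nat.ltb_spec (proj1_sig i) (S k)); destruct (Nat.ltb_spec (proj1_sig i) k);
    destruct (Nat.eqb_spec (proj1_sig i) k); try lia.
  - cx_ring.
  - rewrite <- e, coord_fin; cx_ring.
  - cx_ring.
Qed.

Definition lin d (A : Vec d -> Vec d) : Prop :=
  (forall v w, A (vadd v w) = vadd (A v) (A w)) /\
  (forall a v, A (vscal a v) = vscal a (A v)).

Lemma lin_zero d (A : Vec d -> Vec d) : lin A -> A (@vzero d) = @vzero d.
Proof. intros [_ H]; rewrite vzero_scal, H; apply vext; intro i; unfold vscal, vzero; cx_ring. Qed.

Lemma lin_sub d (A : Vec d -> Vec d) v w : lin A -> A (vsub v w) = vsub (A v) (A w).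
Proof. intros [H1 H2]; rewrite !vsub_eq, H1, H2; reflexivity. Qed.

Lemma lin_id d : lin (fun v : Vec d => v).
Proof. split; reflexivity. Qed.

Lemma lin_trunc_S d (A : Vec d -> Vec d) w k : lin A ->
  A (trunc w (S k)) = vadd (A (trunc w k)) (vscal (coord w k) (A (@ebas d k))).
Proof. intros [H1 H2]; rewrite trunc_S, H1, H2; reflexivity. Qed.

Fixpoint rsum (f : nat -> R) (k : nat) : R :=
  match k with O => 0 | S k' => rsum f k' + f k' end.

Lemma rsum_le f g k : (forall j, (j < k)%nat -> f j <= g j) -> rsum f k <= rsum g k.
Proof.
  induction k as [|k IH]; simpl; intro H; [lra|].
  pose proof (H k ltac:(lia)); assert (rsum f k <= rsum g k) by (apply IH; intros; apply H; lia).
  lra.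
Qed.

Lemma rsum_scal a f k : rsum (fun j => a * f j) k = a * rsum f k.
Proof. induction k as [|k IH]; simpl; [ring|rewrite IH; ring]. Qed.

Lemma rsum_nonneg f k : (forall j, 0 <= f j) -> 0 <= rsum f k.
Proof. induction k as [|k IH]; simpl; intro H; [lra|]; pose proof (H k); pose proof (IH H); lra. Qed.

Lemma N_lin_expand d (N : Vec d -> R) (HN : is_norm N) (A : Vec d -> Vec d) (HA : lin A) w :
  N (A w) <= rsum (fun j => Cmod (coord w j) * N (A (@ebas d j))) d.
Proof.
  rewrite <- (trunc_full w) at 1; generalize d at 2 5; intro k.
  induction k as [|k IH]; simpl.
  - rewrite trunc_0, lin_zero, N_zero; auto; lra.
  - rewrite lin_trunc_S by exact HA.
    eapply Rle_trans; [apply (N_tri HN)|]; rewrite (N_scal HN); lra.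
Qed.

Lemma inv_succ_pos m : 0 < / (INR m + 1).
Proof. apply Rinv_0_lt_compat; pose proof (pos_INR m); lra. Qed.

Lemma inv_succ_small eps : 0 < eps -> exists M, forall m, (M <= m)%nat -> / (INR m + 1) < eps.
Proof.
  intro He; destruct (INR_archimed eps 1 He) as [M HM]; exists M; intros m Hm.
  assert (INR M <= INR m) by (apply le_INR; exact Hm).
  assert (Hx : 0 < INR m + 1) by (pose proof (pos_INR m); lra).
  pose proof (Rinv_r (INR m + 1) ltac:(lra)); pose proof (Rinv_0_lt_compat _ Hx).
  set (y := / (INR m + 1)) in *; nra.
Qed.

Lemma cauchy_from_bound (x : nat -> R) B : 0 <= B ->
  (forall m p, Rabs (x m - x p) <= B * (/ (INR m + 1) + / (INR p + 1))) -> Cauchy_crit x.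
Proof.
  intros HB H eps He.
  destruct (@inv_succ_small (eps / (2 * (B + 1)))) as [M HM]; [apply Rdiv_lt_0_compat; lra|].
  exists M; intros m p Hm Hp; unfold R_dist.
  pose proof (HM m Hm); pose proof (HM p Hp); pose proof (H m p).
  assert (B * (eps / (2 * (B + 1))) * 2 < eps).
  { replace (B * (eps / (2 * (B + 1))) * 2) with (eps - eps / (B + 1)) by (field; lra).
    assert (0 < eps / (B + 1)) by (apply Rdiv_lt_0_compat; lra). lra. }
  nra.
Qed.

Lemma rsum_eventually_le (f : nat -> nat -> R) n eps :
  (forall j, (j < n)%nat -> exists M, forall m, (M <= m)%nat -> f m j <= eps) ->
  exists M, forall m, (M <= m)%nat -> rsum (f m) n <= INR n * eps.
Proof.
  induction n as [|n IH]; intro H.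
  - exists O; intros; simpl; lra.
  - destruct IH as [M1 H1]; [intros; apply H; lia|].
    destruct (H n ltac:(lia)) as [M2 H2]; exists (max M1 M2); intros m Hm.
    simpl rsum; rewrite S_INR; pose proof (H1 m ltac:(lia)); pose proof (H2 m ltac:(lia)); lra.
Qed.

Lemma cv_const_0 (x : nat -> R) : (forall m, x m = 0) -> Un_cv x 0.
Proof.
  intros H eps He; exists O; intros; rewrite H; unfold R_dist; rewrite Rminus_0_r, Rabs_R0; exact He.
Qed.

Definition coord_cv d (u : nat -> Vec d) (us : Vec d) : Prop :=
  forall i, Un_cv (fun m => fst (u m i)) (fst (us i)) /\ Un_cv (fun m => snd (u m i)) (snd (us i)).

Lemma coord_cauchy_limit d (u : nat -> Vec d) B : 0 <= B ->
  (forall m p i, Cmod (vsub (u m) (u p) i) <= B * (/ (INR m + 1) + / (INR p + 1))) ->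
  exists us, coord_cv u us.
Proof.
  intros HB Hb.
  assert (Hcx : forall i, Cauchy_crit (fun m => fst (u m i))).
  { intro i; apply (cauchy_from_bound _ HB); intros m p.
    eapply Rle_trans; [|apply (Hb m p i)]; eapply Rle_trans; [|apply fst_le_Cmod]; right; reflexivity. }
  assert (Hcy : forall i, Cauchy_crit (fun m => snd (u m i))).
  { intro i; apply (cauchy_from_bound _ HB); intros m p.
    eapply Rle_trans; [|apply (Hb m p i)]; eapply Rle_trans; [|apply snd_le_Cmod]; right; reflexivity. }
  exists (fun i => (proj1_sig (R_complete _ (Hcx i)), proj1_sig (R_complete _ (Hcy i)))).
  intro i; simpl; split; [destruct (R_complete _ (Hcx i))|destruct (R_complete _ (Hcy i))]; assumption.
Qed.

Lemma coord_cv_Cmod d (u : nat -> Vec d) us : coord_cv u us ->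
  forall i c, 0 < c -> exists M, forall m, (M <= m)%nat -> Cmod (vsub us (u m) i) <= c.
Proof.
  intros Hcv i c Hc; destruct (Hcv i) as [Hx Hy].
  destruct (Hx (c / 2) ltac:(lra)) as [Ma Ha]; destruct (Hy (c / 2) ltac:(lra)) as [Mb Hb].
  exists (max Ma Mb); intros m Hm.
  pose proof (Ha m ltac:(lia)) as A1; pose proof (Hb m ltac:(lia)) as A2; unfold R_dist in A1, A2.
  eapply Rle_trans; [apply Cmod_le_abs|]; unfold vsub, Cadd, Copp; simpl.
  rewrite (Rabs_minus_sym (fst _)), (Rabs_minus_sym (snd _)) in *; unfold Rminus in *; lra.
Qed.

Lemma coord_cv_norm d (N : Vec d -> R) (HN : is_norm N) (u : nat -> Vec d) us : coord_cv u us ->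
  forall eps, 0 < eps -> exists M, forall m, (M <= m)%nat -> N (vsub us (u m)) <= eps.
Proof.
  intros Hcv eps He.
  set (eps' := eps / (INR d + 1)).
  assert (He' : 0 < eps') by (apply Rdiv_lt_0_compat; [lra|pose proof (pos_INR d); lra]).
  destruct (@rsum_eventually_le (fun m j => Cmod (coord (vsub us (u m)) j) * N (@ebas d j)) d eps')
    as [M HM].
  { intros j hj; set (jj := exist (fun j => (j < d)%nat) j hj : Fin d).
    assert (Hne := N_nonneg HN (@ebas d j)).
    destruct (coord_cv_Cmod Hcv jj (c := eps' / (N (@ebas d j) + 1))) as [M HM];
      [apply Rdiv_lt_0_compat; lra|].
    exists M; intros m Hm; specialize (HM m Hm).
    change (coord (vsub us (u m)) j) with (coord (vsub us (u m)) (proj1_sig jj)); rewrite coord_fin.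
    assert (eps' / (N (@ebas d j) + 1) * N (@ebas d j) <= eps').
    { replace (eps' / (N (@ebas d j) + 1) * N (@ebas d j))
        with (eps' - eps' / (N (@ebas d j) + 1)) by (field; lra).
      assert (0 < eps' / (N (@ebas d j) + 1)) by (apply Rdiv_lt_0_compat; lra). lra. }
    pose proof (Cmod_nonneg (vsub us (u m) jj)); nra. }
  exists M; intros m Hm.
  eapply Rle_trans; [apply (N_lin_expand HN (lin_id d))|].
  eapply Rle_trans; [apply (HM m Hm)|].
  unfold eps'; pose proof (pos_INR d).
  replace (INR d * (eps / (INR d + 1))) with (eps - eps / (INR d + 1)) by (field; lra).
  assert (0 < eps / (INR d + 1)) by (apply Rdiv_lt_0_compat; lra). lra.
Qed.

(* S_k: vectors whose coordinates of index >= k vanish; S_k is closed under limits. *)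
Definition supp_below d (k : nat) (w : Vec d) : Prop :=
  forall i : Fin d, (k <= proj1_sig i)%nat -> w i = (0,0).

Lemma supp_below_limit d k (u : nat -> Vec d) us :
  (forall m, supp_below k (u m)) -> coord_cv u us -> supp_below k us.
Proof.
  intros Hu Hcv i hi; destruct (Hcv i) as [Hx Hy].
  assert (E1 : fst (us i) = 0).
  { apply (UL_sequence _ _ _ Hx), cv_const_0; intro m; rewrite (Hu m i hi); reflexivity. }
  assert (E2 : snd (us i) = 0).
  { apply (UL_sequence _ _ _ Hy), cv_const_0; intro m; rewrite (Hu m i hi); reflexivity. }
  rewrite (surjective_pairing (us i)), E1, E2; reflexivity.
Qed.

(* Every norm on C^d dominates the coordinates: |w_i| <= B N w.  This is proved
   by induction on k for vectors in S_k; the inductive step rests on the fact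
   that e_k stays at positive distance from S_k, which uses completeness. *)
Section CoordinateBound.
Variables (d : nat) (N : Vec d -> R).
Hypothesis HN : is_norm N.

Definition coord_bounded_on (k : nat) (B : R) : Prop :=
  forall u, supp_below k u -> forall i, Cmod (u i) <= B * N u.

(* If the bound holds on S_k, then e_k is at positive distance from S_k:
   otherwise e_k + u_m -> 0 with u_m in S_k, the u_m converge to some u in S_k,
   and e_k + u = 0 contradicts u_k = 0. *)
Lemma basis_gap k (hk : (k < d)%nat) B : 0 <= B -> coord_bounded_on k B ->
  exists del, 0 < del /\ forall u, supp_below k u -> del <= N (vadd (@ebas d k) u).
Proof.
  intros HB0 HB; apply NNPP; intro Hno; set (e := @ebas d k).
  assert (Hs : forall m : nat, exists u, supp_below k u /\ N (vadd e u) < / (INR m + 1)).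
  { intro m; apply NNPP; intro Hm; apply Hno; exists (/ (INR m + 1)).
    split; [apply inv_succ_pos|]; intros u Hu; apply Rnot_lt_le; intro Hlt; apply Hm; eauto. }
  destruct (choice _ Hs) as [u Hu].
  assert (Hosc : forall m p i, Cmod (vsub (u m) (u p) i) <= B * (/ (INR m + 1) + / (INR p + 1))).
  { intros m p i; destruct (Hu m) as [Sm Nm]; destruct (Hu p) as [Sp Np].
    eapply Rle_trans; [apply HB|].
    { intros j hj; unfold vsub; rewrite (Sm j hj), (Sp j hj); cx_ring. }
    apply Rmult_le_compat_l; [exact HB0|].
    replace (vsub (u m) (u p)) with (vsub (vadd e (u m)) (vadd e (u p)))
      by (apply vext; intro j; unfold vsub, vadd; cx_ring).
    pose proof (N_sub_le HN (vadd e (u m)) (vadd e (u p))); lra. }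
  destruct (@coord_cauchy_limit d u B HB0 Hosc) as [us Hcv].
  assert (Hsupp : supp_below k us) by (apply (supp_below_limit (u := u)); [apply Hu|exact Hcv]).
  assert (Hzero : N (vadd e us) = 0).
  { apply Rle_antisym; [|apply (N_nonneg HN)]; apply Rnot_lt_le; intro Hpos.
    set (eps := N (vadd e us) / 2).
    destruct (coord_cv_norm HN Hcv (eps := eps)) as [M1 H1]; [unfold eps; lra|].
    destruct (@inv_succ_small eps) as [M2 H2]; [unfold eps; lra|].
    set (m := max M1 M2).
    pose proof (H1 m ltac:(lia)); pose proof (H2 m ltac:(lia)); destruct (Hu m) as [_ Hm].
    pose proof (N_tri HN (vadd e (u m)) (vsub us (u m))) as T.
    replace (vadd (vadd e (u m)) (vsub us (u m))) with (vadd e us) in T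
      by (apply vext; intro j; unfold vadd, vsub; cx_ring).
    unfold eps in *; lra. }
  set (kk := exist (fun j => (j < d)%nat) k hk : Fin d).
  pose proof (f_equal (fun v => fst (v kk)) (N_def HN _ Hzero)) as E.
  unfold vadd, e, ebas, vzero, Cadd in E; simpl in E; rewrite Nat.eqb_refl in E.
  rewrite (Hsupp kk (le_n k)) in E; simpl in E; lra.
Qed.

(* In S_(k+1), the coordinate a = u_k is controlled through the gap:
   u = a (e_k + a^-1 w) with w in S_k, hence |a| del <= N u. *)
Lemma top_coord_bound k (hk : (k < d)%nat) del :
  (forall u, supp_below k u -> del <= N (vadd (@ebas d k) u)) ->
  forall u, supp_below k (vsub u (vscal (u (exist _ k hk)) (@ebas d k))) ->
  Cmod (u (exist _ k hk)) * del <= N u.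
Proof.
  intros Hdel u Hw; set (a := u (exist _ k hk)) in *; set (w := vsub u (vscal a (@ebas d k))) in *.
  destruct (classic (a = (0,0))) as [Ha|Ha].
  - rewrite Ha, Cmod_0; pose proof (N_nonneg HN u); lra.
  - assert (Eu : u = vscal a (vadd (@ebas d k) (vscal (Cinv a) w))).
    { apply vext; intro i; unfold vscal, vadd.
      transitivity (Cadd (Cmul a (@ebas d k i)) (Cmul a (Cmul (Cinv a) (w i)))); [|cx_ring].
      rewrite (Cmul_inv_cancel (w i) Ha); unfold w, vsub, vscal; cx_ring. }
    rewrite Eu, (N_scal HN); apply Rmult_le_compat_l; [apply Cmod_nonneg|].
    apply Hdel; intros i hi; unfold vscal; rewrite (Hw i hi); cx_ring.
Qed.

Lemma coord_bound_step k (hk : (k < d)%nat) B del : 0 <= B -> 0 < del ->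
  coord_bounded_on k B -> (forall u, supp_below k u -> del <= N (vadd (@ebas d k) u)) ->
  coord_bounded_on (S k) (/ del + B * (1 + N (@ebas d k) * / del)).
Proof.
  intros HB0 Hdel0 HB Hdel u Hu; set (e := @ebas d k); set (kk := exist (fun j => (j < d)%nat) k hk).
  set (a := u kk); set (w := vsub u (vscal a e)).
  assert (Hw : supp_below k w).
  { intros i hi; unfold w, vsub, vscal, e, ebas; destruct (Nat.eqb_spec (proj1_sig i) k) as [E|E].
    - rewrite (fin_eq i kk E); fold a; cx_ring.
    - rewrite (Hu i ltac:(lia)); cx_ring. }
  assert (Hinv : 0 < / del) by (apply Rinv_0_lt_compat; exact Hdel0).
  assert (Hne := N_nonneg HN e); assert (Hnu := N_nonneg HN u); assert (Hna := Cmod_nonneg a).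
  assert (Ha : Cmod a <= N u * / del).
  { apply Rmult_le_reg_r with del; [exact Hdel0|]; rewrite Rmult_assoc, Rinv_l by lra.
    rewrite Rmult_1_r; exact (top_coord_bound hk Hdel Hw). }
  assert (Hnw : N w <= N u + Cmod a * N e) by (unfold w; rewrite <- (N_scal HN); apply (N_sub_le HN)).
  assert (0 <= N u * / del) by (apply Rmult_le_pos; lra).
  assert (0 <= B * N e) by (apply Rmult_le_pos; lra).
  intro i; destruct (Nat.eqb_spec (proj1_sig i) k) as [E|E].
  - rewrite (fin_eq i kk E); fold a; nra.
  - replace (u i) with (w i) by (unfold w, vsub, vscal, e, ebas;
      destruct (Nat.eqb_spec (proj1_sig i) k); [lia|cx_ring]).
    pose proof (HB w Hw i).
    assert (B * N w <= B * (N u + Cmod a * N e)) by (apply Rmult_le_compat_l; lra).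
    assert (B * N e * Cmod a <= B * N e * (N u * / del)) by (apply Rmult_le_compat_l; lra).
    nra.
Qed.

Lemma coord_bounded_ind k : exists B, 0 <= B /\ coord_bounded_on k B.
Proof.
  induction k as [|k [B [HB0 HB]]].
  - exists 0; split; [lra|]; intros u Hu i; rewrite (Hu i ltac:(lia)), Cmod_0.
    pose proof (N_nonneg HN u); lra.
  - destruct (le_lt_dec d k) as [hdk|hk].
    + exists B; split; [exact HB0|]; intros u Hu; apply HB; intros [i hi] h; simpl in *; lia.
    + destruct (basis_gap hk HB0 HB) as [del [Hdel0 Hdel]].
      exists (/ del + B * (1 + N (@ebas d k) * / del)); split.
      * assert (0 < / del) by (apply Rinv_0_lt_compat; exact Hdel0).
        pose proof (N_nonneg HN (@ebas d k)).
        assert (0 <= N (@ebas d k) * / del) by (apply Rmult_le_pos; lra). nra.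
      * exact (coord_bound_step hk HB0 Hdel0 HB Hdel).
Qed.

Lemma coord_bound : exists B, 0 <= B /\ forall w i, Cmod (w i) <= B * N w.
Proof.
  destruct (coord_bounded_ind d) as [B [HB0 HB]]; exists B; split; [exact HB0|].
  intro w; apply HB; intros [i hi] h; simpl in h; lia.
Qed.

Lemma lin_bounded (A : Vec d -> Vec d) : lin A -> exists C, 0 <= C /\ forall w, N (A w) <= C * N w.
Proof.
  intro HA; destruct coord_bound as [B [HB0 HB]].
  exists (B * rsum (fun j => N (A (@ebas d j))) d); split.
  { apply Rmult_le_pos; [exact HB0|]; apply rsum_nonneg; intro; apply (N_nonneg HN). }
  intro w; eapply Rle_trans; [apply (N_lin_expand HN HA)|].
  eapply Rle_trans; [apply rsum_le with (g := fun j => (B * N w) * N (A (@ebas d j)))|].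
  - intros j hj; apply Rmult_le_compat_r; [apply (N_nonneg HN)|].
    change (coord w j) with (coord w (proj1_sig (exist (fun j => (j < d)%nat) j hj))).
    rewrite coord_fin; apply HB.
  - rewrite rsum_scal; right; ring.
Qed.
End CoordinateBound.

Definition pvarn d (k : nat) : Poly d :=
  match lt_dec k d with left h => PVar (exist _ k h) | right _ => PConst (0,0) end.

Lemma peval_pvarn d k (v : Vec d) : peval (pvarn d k) v = coord v k.
Proof. unfold pvarn, coord; destruct (lt_dec k d); reflexivity. Qed.

Fixpoint psum d (f : nat -> Poly d) (k : nat) : Poly d :=
  match k with O => PConst (0,0) | S k' => PAdd (psum f k') (f k') end.

Definition plin d (A : Vec d -> Vec d) (i : Fin d) : Poly d :=
  psum (fun k => PMul (pvarn d k) (PConst (A (@ebas d k) i))) d.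

Lemma peval_plin d (A : Vec d -> Vec d) (HA : lin A) i v : peval (plin A i) v = A v i.
Proof.
  unfold plin; rewrite <- (trunc_full v) at 2.
  enough (H : forall k, peval (psum (fun k => PMul (pvarn d k) (PConst (A (@ebas d k) i))) k) v
                        = A (trunc v k) i) by apply H.
  intro k; induction k as [|k IH]; simpl.
  - rewrite trunc_0, lin_zero by exact HA; reflexivity.
  - rewrite lin_trunc_S, IH, peval_pvarn by exact HA; reflexivity.
Qed.

Fixpoint psubst d (p : Poly d) (s : Fin d -> Poly d) : Poly d :=
  match p with
  | PVar i => s i
  | PConst a => PConst a
  | PAdd p q => PAdd (psubst p s) (psubst q s)
  | PMul p q => PMul (psubst p s) (psubst q s)
  end.

Lemma peval_psubst d (p : Poly d) s v : peval (psubst p s) v = peval p (fun i => peval (s i) v).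
Proof. induction p; simpl; congruence. Qed.

Lemma peval_compose_lin d (p : Poly d) (A : Vec d -> Vec d) (HA : lin A) v :
  peval (psubst p (plin A)) v = peval p (A v).
Proof. rewrite peval_psubst; f_equal; apply vext; intro i; apply peval_plin, HA. Qed.

Definition cprod (l : list Cx) : Cx := fold_right Cmul (1,0) l.

Lemma cprod_perm l l' : Permutation l l' -> cprod l = cprod l'.
Proof.
  induction 1 as [| |x y l|]; simpl; try congruence.
  unfold cprod; simpl; cx_ring.
Qed.

Lemma cprod_zero l : In (0,0) l -> cprod l = (0,0).
Proof.
  unfold cprod; induction l as [|a l IH]; simpl; [tauto|]; intros [->|H].
  - cx_ring.
  - rewrite IH by exact H; cx_ring.
Qed.

Lemma cprod_one l : (forall z, In z l -> z = (1,0)) -> cprod l = (1,0).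
Proof.
  unfold cprod; induction l as [|a l IH]; simpl; intro H; [reflexivity|].
  rewrite IH, (H a) by auto; cx_ring.
Qed.

(* Built from affine functions
   separating two points, combined by 1 - (1-q)(1-l) (union in B) and by
   products (union in A). *)
Section SeparatingPolynomials.
Variable d : nat.

Lemma separate_two_points (a b : Vec d) : a <> b ->
  exists l : Poly d, peval l a = (0,0) /\ peval l b = (1,0).
Proof.
  intro Hab; assert (exists i, a i <> b i) as [i Hi].
  { apply not_all_ex_not; intro H; apply Hab, vext, H. }
  assert (Hz : Cadd (b i) (Copp (a i)) <> (0,0)) by (intro E; apply Hi, eq_sym, Cadd_Copp_eq0, E).
  exists (PMul (PAdd (PVar i) (PConst (Copp (a i)))) (PConst (Cinv (Cadd (b i) (Copp (a i)))))).
  simpl; split.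
  - cx_ring.
  - apply Cmul_inv_r, Hz.
Qed.

Lemma separate_point_list (a : Vec d) (B : list (Vec d)) : (forall b, In b B -> a <> b) ->
  exists q : Poly d, peval q a = (0,0) /\ forall b, In b B -> peval q b = (1,0).
Proof.
  induction B as [|b B IH]; intro Hne.
  - exists (PConst (0,0)); split; [reflexivity|simpl; tauto].
  - destruct IH as [q [Hqa HqB]]; [intros; apply Hne; simpl; auto|].
    destruct (separate_two_points (Hne b (or_introl eq_refl))) as [l [Hla Hlb]].
    exists (PAdd (PAdd q l) (PMul (PConst (-1,0)) (PMul q l))); simpl; split.
    + rewrite Hqa, Hla; cx_ring.
    + intros b' [<-|Hb'].
      * rewrite Hlb; cx_ring.
      * rewrite (HqB b' Hb'); cx_ring.
Qed.

Lemma separate_lists (A B : list (Vec d)) : (forall a b, In a A -> In b B -> a <> b) ->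
  exists p : Poly d, (forall a, In a A -> peval p a = (0,0)) /\ (forall b, In b B -> peval p b = (1,0)).
Proof.
  induction A as [|a A IH]; intro Hne.
  - exists (PConst (1,0)); split; [simpl; tauto|reflexivity].
  - destruct IH as [p [HpA HpB]]; [intros; apply Hne; simpl; auto|].
    destruct (@separate_point_list a B) as [q [Hqa HqB]]; [intros; apply Hne; simpl; auto|].
    exists (PMul q p); simpl; split.
    + intros a' [<-|Ha']; [rewrite Hqa|rewrite (HpA a' Ha')]; cx_ring.
    + intros b Hb; rewrite (HqB b Hb), (HpB b Hb); cx_ring.
Qed.
End SeparatingPolynomials.

Lemma nodup_enumeration (A : Type) : is_finite A -> exists L : list A, NoDup L /\ forall x, In x L.
Proof.
  intros [l Hl].
  assert (exists L, NoDup L /\ forall x, In x l <-> In x L) as [L [HL HLl]].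
  { clear Hl; induction l as [|a l [L [HL HLl]]].
    - exists nil; split; [constructor|simpl; tauto].
    - destruct (classic (In a L)).
      + exists L; split; [exact HL|]; intro x; simpl; rewrite HLl; split; [intros [<-|]|]; auto.
      + exists (a :: L); split; [constructor; auto|]; intro x; simpl; rewrite HLl; tauto. }
  exists L; split; [exact HL|]; intro x; apply HLl, Hl.
Qed.

(* Given disjoint orbits Gx
   and Gy, take p = 0 on Gx and p = 1 on Gy; the product of the translates
   p o g over G is invariant, vanishes at x and equals 1 at y, yet it factors
   through sigma. *)
Section OrbitSeparation.
Variables (G : Type) (mul : G -> G -> G) (e : G) (inv : G -> G).
Hypothesis HG : is_group mul e inv.
Variables (d n : nat) (act : G -> Vec d -> Vec d).
Hypothesis Hact : linear_action mul e act.

Lemma act_lin g : lin (act g).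
Proof. pose proof Hact as [_ [_ [H1 H2]]]; split; [exact (H1 g)|exact (H2 g)]. Qed.

Lemma right_translation_perm (L : list G) : NoDup L -> (forall g, In g L) ->
  forall g, Permutation L (map (fun k => mul k g) L).
Proof.
  pose proof HG as [Hass [_ [He2 [Hil Hir]]]]; intros HL HLall g.
  apply NoDup_Permutation; auto.
  - apply Injective_map_NoDup; [|exact HL]; intros a b E.
    rewrite <- (He2 a), <- (He2 b), <- (Hir g), !Hass, E; reflexivity.
  - intro z; split; intros _; [|apply HLall].
    apply in_map_iff; exists (mul z (inv g)); split; [|apply HLall].
    rewrite <- Hass, Hil, He2; reflexivity.
Qed.

Definition orbit_product (p : Poly d) (L : list G) : Poly d :=
  fold_right (fun k acc => PMul (psubst p (plin (act k))) acc) (PConst (1,0)) L.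

Lemma peval_orbit_product p L v :
  peval (orbit_product p L) v = cprod (map (fun k => peval p (act k v)) L).
Proof.
  induction L as [|k L IH]; simpl; [reflexivity|].
  rewrite IH, peval_compose_lin by apply act_lin; reflexivity.
Qed.

Lemma orbit_product_invariant p (L : list G) : NoDup L -> (forall g, In g L) ->
  invariant act (orbit_product p L).
Proof.
  intros HL HLall g v; rewrite !peval_orbit_product.
  replace (map (fun k => peval p (act k (act g v))) L)
    with (map (fun k => peval p (act k v)) (map (fun k => mul k g) L)).
  - symmetry; apply cprod_perm, Permutation_map, (right_translation_perm HL HLall).
  - rewrite map_map; apply map_ext; intro k; pose proof Hact as [_ [Hmul _]]; rewrite Hmul; reflexivity.
Qed.

Hypothesis Hfin : is_finite G.
Variable sgm : Fin n -> Poly d.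
Hypothesis Hsgm : invariant_generators act sgm.

Lemma sigma_fibres_are_orbits x y : sigma_map sgm x = sigma_map sgm y -> exists g, y = act g x.
Proof.
  intro Hs; apply NNPP; intro Hno.
  pose proof HG as [_ [_ [_ [Hil _]]]]; pose proof Hact as [Hact_e [Hmul _]].
  destruct (nodup_enumeration Hfin) as [L [HL HLall]].
  assert (Hdisj : forall a b, In a (map (fun g => act g x) L) -> In b (map (fun h => act h y) L) -> a <> b).
  { intros a b Ha Hb ->; apply in_map_iff in Ha as [g [Eg _]]; apply in_map_iff in Hb as [h [Eh _]].
    apply Hno; exists (mul (inv h) g); rewrite Hmul, Eg, <- Eh, <- Hmul, Hil, Hact_e; reflexivity. }
  destruct (separate_lists _ _ Hdisj) as [p [Hpx Hpy]].
  set (f := orbit_product p L).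
  assert (Hf : peval f x = peval f y).
  { destruct Hsgm as [_ Hgen]; destruct (Hgen f (orbit_product_invariant p HL HLall)) as [Q HQ].
    rewrite !HQ; change (fun j => peval (sgm j) x) with (sigma_map sgm x); rewrite Hs; reflexivity. }
  unfold f in Hf; rewrite !peval_orbit_product in Hf.
  rewrite cprod_zero, cprod_one in Hf.
  - injection Hf; lra.
  - intros z Hz; apply in_map_iff in Hz as [k [<- _]]; apply Hpy, (in_map (fun h => act h y)), HLall.
  - apply in_map_iff; exists e; split; [|apply HLall]; apply Hpx, (in_map (fun g => act g x)), HLall.
Qed.
End OrbitSeparation.

Lemma list_uniform_gap (A : Type) (P : A -> Prop) (F : A -> R) (l : list A) :
  (forall a, P a -> 0 < F a) -> exists rho, 0 < rho /\ forall a, In a l -> P a -> rho <= F a.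
Proof.
  intro H; induction l as [|a l [r [Hr Hr']]].
  - exists 1; split; [lra|simpl; tauto].
  - destruct (classic (P a)) as [Pa|Pa].
    + exists (Rmin r (F a)); split; [apply Rmin_pos; auto|].
      intros b [<-|Hb] Pb; [apply Rmin_r|eapply Rle_trans; [apply Rmin_l|auto]].
    + exists r; split; [exact Hr|]; intros b [<-|Hb] Pb; [tauto|auto].
Qed.

Lemma list_uniform_bound (A : Type) (P : A -> R -> Prop) (l : list A) :
  (forall a, exists C, 0 <= C /\ P a C) -> (forall a C C', C <= C' -> P a C -> P a C') ->
  exists C, 0 <= C /\ forall a, In a l -> P a C.
Proof.
  intros H Hm; induction l as [|a l [C [HC HC']]].
  - exists 0; split; [lra|simpl; tauto].
  - destruct (H a) as [Ca [Ha Ha']]; exists (Rmax C Ca); split.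
    + eapply Rle_trans; [apply HC|apply Rmax_l].
    + intros b [<-|Hb]; [apply Hm with Ca; auto; apply Rmax_r|apply Hm with C; auto; apply Rmax_l].
Qed.

Section FiniteGroupBounds.
Variables (G : Type) (d : nat) (act : G -> Vec d -> Vec d) (N : Vec d -> R).
Hypothesis HN : is_norm N.
Hypothesis Hlin : forall g, lin (act g).
Hypothesis Hfin : is_finite G.

Lemma action_uniformly_bounded : exists C, 0 <= C /\ forall g w, N (act g w) <= C * N w.
Proof.
  destruct Hfin as [L HL].
  destruct (@list_uniform_bound G (fun g C => forall w, N (act g w) <= C * N w) L) as [C [HC0 HC]].
  - intro g; apply (lin_bounded HN (Hlin g)).
  - intros g C1 C2 HC12 H w; eapply Rle_trans; [apply H|].
    apply Rmult_le_compat_r; [apply (N_nonneg HN)|exact HC12].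
  - exists C; split; [exact HC0|]; intro g; apply HC, HL.
Qed.

Lemma orbit_gap v : exists rho, 0 < rho /\
  forall g h, act g v <> act h v -> rho <= N (vsub (act g v) (act h v)).
Proof.
  destruct Hfin as [L HL].
  destruct (@list_uniform_gap (G * G) (fun gh => act (fst gh) v <> act (snd gh) v)
              (fun gh => N (vsub (act (fst gh) v) (act (snd gh) v))) (list_prod L L)) as [rho [Hr Hr']].
  - intros [g h] Hne; apply (N_sub_pos HN), Hne.
  - exists rho; split; [exact Hr|]; intros g h Hne; apply (Hr' (g, h)); [apply in_prod; auto|exact Hne].
Qed.
End FiniteGroupBounds.

Lemma real_induction (P : R -> Prop) s t : s <= t -> P s ->
  (forall m, s < m <= t -> (forall r, s <= r < m -> P r) -> P m) ->
  (forall m, s <= m < t -> (forall r, s <= r <= m -> P r) ->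
     exists r, m < r /\ forall r', m < r' <= r -> r' <= t -> P r') ->
  forall r, s <= r <= t -> P r.
Proof.
  intros Hst Hs Hleft Hright.
  set (E := fun r => s <= r <= t /\ forall r', s <= r' <= r -> P r').
  assert (Es : E s) by (split; [lra|intros r' Hr'; replace r' with s by lra; exact Hs]).
  destruct (completeness E) as [m [Hub Hlub]]; [exists t; intros x [Hx _]; lra|exists s; exact Es|].
  assert (Hsm : s <= m) by (apply Hub, Es).
  assert (Hmt : m <= t) by (apply Hlub; intros x [Hx _]; lra).
  assert (Hbelow : forall r, s <= r < m -> P r).
  { intros r Hr; apply NNPP; intro HP.
    assert (Hr_ub : is_upper_bound E r).
    { intros x [Hx Hx']; apply Rnot_lt_le; intro Hlt; apply HP, Hx'; lra. }
    pose proof (Hlub r Hr_ub); lra. }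
  assert (Hupto : forall r, s <= r <= m -> P r).
  { intros r Hr; destruct (Req_dec r m) as [->|Hne]; [|apply Hbelow; lra].
    destruct (Req_dec m s) as [->|Hms]; [exact Hs|apply Hleft; [lra|exact Hbelow]]. }
  assert (Hm : m = t).
  { apply NNPP; intro Hmt'.
    destruct (Hright m ltac:(lra) Hupto) as [r [Hmr Hr]].
    pose proof (Rmin_glb_lt r t m Hmr ltac:(lra)); pose proof (Rmin_l r t); pose proof (Rmin_r r t).
    assert (Hmin : E (Rmin r t)).
    { split; [lra|]; intros r' Hr'; destruct (Rle_lt_dec r' m); [apply Hupto; lra|].
      apply Hr; lra. }
    pose proof (Hub _ Hmin); lra. }
  subst m; exact Hupto.
Qed.

Lemma local_to_global_lipschitz d (N : Vec d -> R) (HN : is_norm N) (I : R -> Prop)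
  (HI : is_interval I) (f : R -> Vec d) M :
  (forall r0, I r0 -> exists eta, 0 < eta /\
     forall r, I r -> Rabs (r - r0) < eta -> N (vsub (f r) (f r0)) <= M * Rabs (r - r0)) ->
  forall s t, I s -> I t -> N (vsub (f s) (f t)) <= M * Rabs (s - t).
Proof.
  intros Hloc.
  assert (Hmono : forall s t, I s -> I t -> s <= t -> N (vsub (f t) (f s)) <= M * (t - s)).
  { intros s t Hs Ht Hst.
    assert (HIn : forall r, s <= r <= t -> I r) by (intros r Hr; apply (HI s t r); auto).
    apply (@real_induction (fun r => N (vsub (f r) (f s)) <= M * (r - s)) s t); [lra| | | |lra].
    - rewrite (N_sub_self HN); lra.
    - intros m Hm Hbelow.
      destruct (Hloc m (HIn m ltac:(lra))) as [eta [Heta Hl]].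
      set (r := Rmax s (m - eta / 2)).
      assert (s <= r < m) by (split; [apply Rmax_l|unfold r; apply Rmax_lub_lt; lra]).
      assert (m - eta / 2 <= r) by apply Rmax_r.
      pose proof (Hbelow r ltac:(lra)).
      pose proof (Hl r (HIn r ltac:(lra)) ltac:(rewrite Rabs_left by lra; lra)) as Hmr.
      rewrite Rabs_left, (N_sub_sym HN) in Hmr by lra.
      pose proof (N_sub_tri HN (f m) (f r) (f s)); lra.
    - intros m Hm Hupto.
      destruct (Hloc m (HIn m ltac:(lra))) as [eta [Heta Hl]].
      exists (m + eta / 2); split; [lra|]; intros r' Hr' Hr't.
      pose proof (Hupto m ltac:(lra)).
      pose proof (Hl r' (HIn r' ltac:(lra)) ltac:(rewrite Rabs_right by lra; lra)) as Hrm.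
      rewrite Rabs_right in Hrm by lra.
      pose proof (N_sub_tri HN (f r') (f m) (f s)); lra. }
  intros s t Hs Ht; destruct (Rle_lt_dec s t).
  - rewrite (N_sub_sym HN), Rabs_left1 by lra; replace (- (s - t)) with (t - s) by ring.
    apply Hmono; auto.
  - rewrite Rabs_right by lra; apply Hmono; auto; lra.
Qed.

(* Near r0, write cb r0 = h (ct r0) and cb r = g (ct r).
   If g and h agree on ct r0, then cb r - cb r0 = g (ct r - ct r0) has norm at
   most C K |r - r0|.  Otherwise g (ct r0) and h (ct r0) are distinct points of
   one orbit, hence at distance >= rho, while continuity of cb and the
   Lipschitz bound on ct make that distance < rho for r close to r0. *)
Section LocalEstimate.
Variables (G : Type) (d n : nat) (act : G -> Vec d -> Vec d) (sgm : Fin n -> Poly d).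
Variable N : Vec d -> R.
Hypothesis HN : is_norm N.
Hypothesis Hlin : forall g, lin (act g).
Variable C : R.
Hypothesis HC0 : 0 <= C.
Hypothesis HC : forall g w, N (act g w) <= C * N w.
Hypothesis Hfibres : forall x y, sigma_map sgm x = sigma_map sgm y -> exists g, y = act g x.
Hypothesis Hgap : forall v, exists rho, 0 < rho /\
  forall g h, act g v <> act h v -> rho <= N (vsub (act g v) (act h v)).
Variables (I : R -> Prop) (c : R -> Vec n) (ct cb : R -> Vec d).
Hypothesis Hct : is_lift sgm I c ct.
Hypothesis Hcb : is_lift sgm I c cb.
Hypothesis Hcbc : continuous_on_norm N I cb.
Variable K : R.
Hypothesis HK0 : 0 <= K.
Hypothesis HK : forall s t, I s -> I t -> N (vsub (ct s) (ct t)) <= K * Rabs (s - t).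

Lemma lift_locally_lipschitz r0 : I r0 -> exists eta, 0 < eta /\
  forall r, I r -> Rabs (r - r0) < eta -> N (vsub (cb r) (cb r0)) <= C * K * Rabs (r - r0).
Proof.
  intro Hr0; set (v := ct r0); set (M := C * K).
  assert (HM : 0 <= M) by (apply Rmult_le_pos; assumption).
  destruct (@Hfibres v (cb r0)) as [h Hh]; [unfold v; rewrite Hct, Hcb by exact Hr0; reflexivity|].
  destruct (Hgap v) as [rho [Hrho0 Hrho]].
  destruct (Hcbc Hr0 (eps := rho / 2)) as [delta [Hdelta Hcont]]; [lra|].
  set (eta := Rmin delta (rho / (2 * (M + 1)))).
  exists eta; split; [apply Rmin_pos; [exact Hdelta|apply Rdiv_lt_0_compat; lra]|].
  intros r Hr Hrr.
  assert (Hrr1 : Rabs (r - r0) < delta) by (eapply Rlt_le_trans; [apply Hrr|apply Rmin_l]).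
  assert (Hrr2 : M * Rabs (r - r0) < rho / 2).
  { assert (Rabs (r - r0) < rho / (2 * (M + 1))) by (eapply Rlt_le_trans; [apply Hrr|apply Rmin_r]).
    assert (M * Rabs (r - r0) <= M * (rho / (2 * (M + 1)))) by (apply Rmult_le_compat_l; lra).
    replace (M * (rho / (2 * (M + 1)))) with (rho / 2 - rho / (2 * (M + 1))) in * by (field; lra).
    assert (0 < rho / (2 * (M + 1))) by (apply Rdiv_lt_0_compat; lra). lra. }
  destruct (@Hfibres (ct r) (cb r)) as [g Hg]; [rewrite Hct, Hcb by exact Hr; reflexivity|].
  assert (Hshift : N (act g (vsub (ct r) v)) <= M * Rabs (r - r0)).
  { eapply Rle_trans; [apply HC|]; unfold M; rewrite Rmult_assoc.
    apply Rmult_le_compat_l; [exact HC0|apply HK; assumption]. }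
  rewrite Hg, Hh; destruct (classic (act g v = act h v)) as [Eq|Neq].
  - rewrite <- Eq, <- lin_sub by apply Hlin; exact Hshift.
  - exfalso; pose proof (Hrho g h Neq).
    pose proof (N_sub_tri HN (act g v) (act g (ct r)) (act h v)) as Htri.
    rewrite (N_sub_sym HN (act g v) (act g (ct r))), <- lin_sub in Htri by apply Hlin.
    pose proof (Hcont r Hr Hrr1) as Hnear; rewrite Hg, Hh in Hnear; lra.
Qed.
End LocalEstimate.

Theorem lemma5p3 (d n : nat) (G : Type) (mul : G -> G -> G) (e : G) (inv : G -> G)
  (HG : is_group mul e inv) (Hfin : is_finite G)
  (act : G -> Vec d -> Vec d) (Hact : linear_action mul e act)
  (sgm : Fin n -> Poly d) (Hsgm : invariant_generators act sgm)
  (N : Vec d -> R) (HN : is_norm N)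
  (I : R -> Prop) (HI : is_interval I)
  (c : R -> Vec n) (Hc : continuous_on_coord I c)
  (ct : R -> Vec d) (Hct : is_lift sgm I c ct) (Hctl : lipschitz_on N I ct)
  (cb : R -> Vec d) (Hcb : is_lift sgm I c cb) (Hcbc : continuous_on_norm N I cb) :
  lipschitz_on N I cb.
Proof.
  pose proof (act_lin Hact) as Hlin.
  destruct (action_uniformly_bounded act HN Hlin Hfin) as [C [HC0 HC]].
  destruct Hctl as [K HK].
  assert (HK' : forall s t, I s -> I t -> N (vsub (ct s) (ct t)) <= Rabs K * Rabs (s - t)).
  { intros s t Hs Ht; eapply Rle_trans; [apply HK; assumption|].
    apply Rmult_le_compat_r; [apply Rabs_pos|apply RRle_abs]. }
  exists (C * Rabs K).
  apply (local_to_global_lipschitz HN HI cb); intros r0 Hr0.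
  exact (lift_locally_lipschitz act HN Hlin HC0 HC (sigma_fibres_are_orbits HG Hact Hfin Hsgm)
           (orbit_gap act HN Hfin) Hct Hcb Hcbc (Rabs_pos K) HK' r0 Hr0).
Qed.
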